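(* Let $L_1\subseteq T^\omega_{\Sigma_1}$ and $L_2\subseteq T^\omega_{\Sigma_2}$ be regular tree languages, and let $F:\Sigma_1^*\to\Sigma_2$ be a function definable by a Moore machine. Assume that for every $t\in T^\omega_{\Sigma_1}$, $t\in L_1$ iff $\widehat{F}(t)\in L_2$. Then $da(L_1)\le da(L_2)$.
   Context: $T^\omega_\Sigma$ is the set of trees $t:\{l,r\}^*\to\Sigma$. A Moore machine $M=(\Sigma,\Gamma,Q,q_I,\delta,out)$ has finite state set $Q$, initial state $q_I$, transition function $\delta:Q\times\Sigma\to Q$ and output $out:Q\to\Gamma$; $\widehat\delta(\epsilon)=q_I$, $\widehat\delta(w a)=\delta(\widehat\delta(w),a)$; $F:\Sigma^*\to\Gamma$ is definable by $M$ if $F(w)=out(\widehat\delta(w))$ for all $w$. For $t_1\in T^\omega_{\Sigma_1}$, $\widehat F(t_1)\in T^\omega_{\Sigma_2}$ is defined by $\widehat F(t_1)(v)=F(t_1(v_1)\cdots t_1(v_k))$ where $v_1,\dots,v_k$ is the path from the root to $v$. A parity tree automaton (PTA) $\mathcal{A}=(Q,\Sigma,Q_I,\delta,\mathbb{C})$ ($Q$ finite, $Q_I\subseteq Q$, $\delta\subseteq Q\times\Sigma\times Q\times Q$, $\mathbb{C}:Q\to\mathbb{N}$) has computations $\phi:\{l,r\}^*\to Q$ with $\phi(\epsilon)\in Q_I$, $(\phi(v),t(v),\phi(vl),\phi(vr))\in\delta$, accepting if on every branch the largest color seen infinitely often is even; $ACC(\mathcal{A},t)$ the set of accepting computations. Degree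 $da(\mathcal{A})$: $k$ if $|ACC(\mathcal{A},t)|\le k$ for all $t$ and ($k=1$ or not for $k-1$); ''finite'' if all finite but unbounded; $\aleph_0$ if all countable, not all finite; $2^{\aleph_0}$ otherwise; ordered $1<2<\dots<\text{finite}<\aleph_0<2^{\aleph_0}$. For a regular language $L$, $da(L)=\min\{da(\mathcal{A})\mid L(\mathcal{A})=L\}$. *)

From mathcomp Require Import all_boot.
From Stdlib Require List.
Set Implicit Arguments. Unset Strict Implicit. Unset Printing Implicit Defensive.

(* Infinite binary trees: nodes are words over {l,r}, encoded l = false, r = true. *)
Definition node := seq bool.
Definition tree (Sigma : Type) := node -> Sigma.

Record moore (Sigma Gamma : Type) := Moore {
  mm_st : finType;
  mm_init : mm_st;
  mm_delta : mm_st -> Sigma -> mm_st;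
  mm_out : mm_st -> Gamma }.

Definition mm_run Sigma Gamma (M : moore Sigma Gamma) (w : seq Sigma) : mm_st M :=
  foldl (@mm_delta _ _ M) (mm_init M) w.
Arguments mm_run {Sigma Gamma} M w.

Definition moore_definable Sigma Gamma (F : seq Sigma -> Gamma) : Prop :=
  exists M : moore Sigma Gamma, forall w, F w = mm_out (mm_run M w).

Definition path_word Sigma (t : tree Sigma) (v : node) : seq Sigma :=
  [seq t (take i v) | i <- iota 0 (size v).+1].

Definition Fhat Sigma1 Sigma2 (F : seq Sigma1 -> Sigma2) (t : tree Sigma1) : tree Sigma2 :=
  fun v => F (path_word t v).

Record PTA (Sigma : Type) := mkPTA {
  pta_st : finType;
  pta_init : pred pta_st;
  pta_delta : pta_st -> Sigma -> pta_st -> pta_st -> bool;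
  pta_col : pta_st -> nat }.

Definition branch_node (b : nat -> bool) (n : nat) : node := mkseq b n.

Definition inf_often (c : nat -> nat) (m : nat) : Prop :=
  forall N, exists n, N <= n /\ c n = m.

Definition parity_ok (c : nat -> nat) : Prop :=
  exists m, ~~ odd m /\ inf_often c m /\ (forall m', m < m' -> ~ inf_often c m').

Definition is_computation Sigma (A : PTA Sigma) (t : tree Sigma) (phi : node -> pta_st A) : Prop :=
  @pta_init _ A (phi [::]) /\
  forall v, @pta_delta _ A (phi v) (t v) (phi (rcons v false)) (phi (rcons v true)).
Arguments is_computation {Sigma} A t phi.

Definition accepting_comp Sigma (A : PTA Sigma) (t : tree Sigma) (phi : node -> pta_st A) : Prop :=
  is_computation A t phi /\
  forall b : nat -> bool, parity_ok (fun n => @pta_col _ A (phi (branch_node b n))).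
Arguments accepting_comp {Sigma} A t phi.

Definition ACC Sigma (A : PTA Sigma) (t : tree Sigma) : (node -> pta_st A) -> Prop :=
  accepting_comp A t.
Arguments ACC {Sigma} A t.

Definition accepts Sigma (A : PTA Sigma) (t : tree Sigma) : Prop :=
  exists phi, accepting_comp A t phi.
Arguments accepts {Sigma} A t.

Definition lang_of Sigma (A : PTA Sigma) (L : tree Sigma -> Prop) : Prop :=
  forall t, accepts A t <-> L t.
Arguments lang_of {Sigma} A L.

Definition regular Sigma (L : tree Sigma -> Prop) : Prop :=
  exists A : PTA Sigma, lang_of A L.

Definition card_le (X : Type) (S : X -> Prop) (k : nat) : Prop :=
  exists l : list X, (List.length l <= k)%coq_nat /\ forall x, S x -> List.In x l.

Definition finite_set (X : Type) (S : X -> Prop) : Prop :=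
  exists l : list X, forall x, S x -> List.In x l.

Definition countable_set (X : Type) (S : X -> Prop) : Prop :=
  exists g : X -> nat, forall x y, S x -> S y -> g x = g y -> x = y.

(* degrees of ambiguity: 1 < 2 < ... < finite < aleph0 < 2^aleph0 *)
Inductive degree := DFin of nat | DFinite | DAleph0 | DCont.

Definition degree_rank (d : degree) : nat :=
  match d with DFin _ => 0 | DFinite => 1 | DAleph0 => 2 | DCont => 3 end.

Definition degree_le (d1 d2 : degree) : Prop :=
  match d1, d2 with
  | DFin k1, DFin k2 => k1 <= k2
  | _, _ => degree_rank d1 <= degree_rank d2
  end.

Definition da_aut Sigma (A : PTA Sigma) (d : degree) : Prop :=
  match d with
  | DFin k => 1 <= k /\ (forall t, card_le (ACC A t) k) /\
              (k = 1 \/ ~ (forall t, card_le (ACC A t) k.-1))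
  | DFinite => (forall t, finite_set (ACC A t)) /\
               ~ (exists k, forall t, card_le (ACC A t) k)
  | DAleph0 => (forall t, countable_set (ACC A t)) /\
               ~ (forall t, finite_set (ACC A t))
  | DCont => ~ (forall t, countable_set (ACC A t))
  end.
Arguments da_aut {Sigma} A d.

Definition da_lang Sigma (L : tree Sigma -> Prop) (d : degree) : Prop :=
  (exists A : PTA Sigma, lang_of A L /\ da_aut A d) /\
  (forall (A : PTA Sigma) d', lang_of A L -> da_aut A d' -> degree_le d d').

From mathcomp Require Import all_boot.
From Stdlib Require Import Classical ClassicalEpsilon FunctionalExtensionality.
From Stdlib Require List Wf_nat.
Set Implicit Arguments. Unset Strict Implicit. Unset Printing Implicit Defensive.

(* Run the Moore machine M alongside an automaton B for L2: the product
   automaton reads t, recomputes the label F^(t)(v) from the state of M and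
   feeds it to B.  Its accepting computations on t are exactly the pairs
   (run of M on t, accepting computation of B on F^(t)), and the first
   component is determined by t; so they inject into those of B on F^(t),
   its degree of ambiguity is at most da(B), and it recognises L1.  Hence
   da(L1) <= da(product) <= da(B) for B realising da(L2). *)

Definition set_embeds (X Y : Type) (S : X -> Prop) (T : Y -> Prop) : Prop :=
  exists (f : X -> Y) (g : Y -> X), forall x, S x -> T (f x) /\ g (f x) = x.

Section SetEmbeds.
Variables (X Y : Type) (S : X -> Prop) (T : Y -> Prop).
Hypothesis ST : set_embeds S T.

Lemma card_le_embeds k : card_le T k -> card_le S k.
Proof.
have [f [g fK]] := ST; move=> [l [size_l Tl]].
exists (List.map g l); split; first by rewrite List.length_map.
move=> x Sx; have [Tfx <-] := fK x Sx.
exact/List.in_map/Tl.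
Qed.

Lemma finite_set_embeds : finite_set T -> finite_set S.
Proof.
have [f [g fK]] := ST; move=> [l Tl].
exists (List.map g l) => x Sx; have [Tfx <-] := fK x Sx.
exact/List.in_map/Tl.
Qed.

Lemma countable_set_embeds : countable_set T -> countable_set S.
Proof.
have [f [g fK]] := ST; move=> [c c_inj].
exists (c \o f) => x y Sx Sy /= cfxy.
have [Tfx <-] := fK x Sx; have [Tfy <-] := fK y Sy.
by rewrite (c_inj _ _ Tfx Tfy cfxy).
Qed.

End SetEmbeds.

Lemma card_le_leq (X : Type) (S : X -> Prop) k k' :
  card_le S k -> k <= k' -> card_le S k'.
Proof.
move=> [l [size_l Sl]] /leP le_kk'; exists l; split => //.
exact: PeanoNat.Nat.le_trans size_l le_kk'.
Qed.

Lemma card_le_finite (X : Type) (S : X -> Prop) k : card_le S k -> finite_set S.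
Proof. by move=> [l [_ Sl]]; exists l. Qed.

Lemma finite_set_countable (X : Type) (S : X -> Prop) :
  finite_set S -> countable_set S.
Proof.
move=> [l Sl].
exists (fun x => epsilon (inhabits 0) (fun n => List.nth_error l n = Some x)).
move=> x y Sx Sy.
have l_x := epsilon_spec (inhabits 0) _ (List.In_nth_error _ _ (Sl x Sx)).
have l_y := epsilon_spec (inhabits 0) _ (List.In_nth_error _ _ (Sl y Sy)).
by move=> eq_xy; move: l_x; rewrite eq_xy l_y => -[].
Qed.

Lemma exists_least_nat (P : nat -> Prop) :
  (exists n, P n) -> exists2 n, P n & forall m, P m -> n <= m.
Proof.
move=> exP.
have [n [[Pn n_least] _]] :=
  Wf_nat.dec_inh_nat_subset_has_unique_least_element _ (fun m => classic (P m)) exP.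
by exists n => // m /n_least /leP.
Qed.

Lemma degree_le_trans d1 d2 d3 :
  degree_le d1 d2 -> degree_le d2 d3 -> degree_le d1 d3.
Proof. by case: d1 d2 d3 => [?|||] [?|||] [?|||] //=; apply: leq_trans. Qed.

Lemma exists_least_degree (P : degree -> Prop) :
  (exists d, P d) -> exists2 d, P d & forall d', P d' -> degree_le d d'.
Proof.
move=> [d0 Pd0].
have [|r [d Pd rank_d] r_least] :=
  @exists_least_nat (fun r => exists2 d, P d & degree_rank d = r).
  by exists (degree_rank d0), d0.
case: d Pd rank_d => [k|||] Pd rank_d.
- have [k' Pk' k'_least] :=
    exists_least_nat (ex_intro (fun k => P (DFin k)) k Pd).
  by exists (DFin k') => // [[k''|||]] //= /k'_least.
all: eexists; first exact: Pd.
all: move=> d' Pd'; have := r_least _ (ex_intro2 _ _ d' Pd' erefl).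
all: by case: d' {Pd'}; rewrite -rank_d.
Qed.

Definition da_at_most Sigma (A : PTA Sigma) (d : degree) : Prop :=
  match d with
  | DFin k => forall t, card_le (ACC A t) k
  | DFinite => forall t, finite_set (ACC A t)
  | DAleph0 => forall t, countable_set (ACC A t)
  | DCont => True
  end.
Arguments da_at_most {Sigma} A d.

Section Degree.
Variables (Sigma : Type) (A : PTA Sigma).

Lemma da_aut_at_most d : da_aut A d -> da_at_most A d.
Proof. by case: d => [k [_ []]|[]|[]|]. Qed.

Lemma da_aut_ge1 d : da_aut A d -> degree_le (DFin 1) d.
Proof. by case: d => [k []|||]. Qed.

(* The hypothesis on d' is needed: if A accepts nothing then da(A) = 1,
   yet A has at most 0 accepting computations on every tree. *)
Lemma da_aut_least d d' :
  da_aut A d -> da_at_most A d' -> degree_le (DFin 1) d' -> degree_le d d'.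
Proof.
case: d => [k|||] daA bound' d'_ge1.
- case: d' bound' d'_ge1 => [k'|||] //= bound' k'_gt0.
  case: daA => [k_gt0 [_ [-> //|not_pred]]].
  rewrite leqNgt; apply/negP => lt_k'k; apply: not_pred => t.
  by apply: card_le_leq (bound' t) _; rewrite -ltnS prednK.
- case: daA => [_ unbounded]; case: d' bound' {d'_ge1} => [k'|||] //= bound'.
  by case: unbounded; exists k'.
- case: daA => [_ infinite].
  case: d' bound' {d'_ge1} => [k'|||] //= bound'; case: infinite => //.
  by move=> t; apply: card_le_finite (bound' t).
- case: d' bound' {d'_ge1} => [k'|||] //= bound'; case: daA => //.
  + by move=> t; apply/finite_set_countable/card_le_finite/(bound' t).
  + by move=> t; apply/finite_set_countable/bound'.
Qed.

Lemma da_aut_exists : exists d, da_aut A d.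
Proof.
have [d [bound d_ge1] d_least] := exists_least_degree
  (ex_intro (fun d => da_at_most A d /\ degree_le (DFin 1) d) DCont (conj I isT)).
exists d; case: d bound d_ge1 d_least => [k|||] /= bound d_ge1 d_least.
- do 2!split => //; case: k bound d_ge1 d_least => [|[|k]] // _ _ d_least.
  + by left.
  + right=> bound_pred.
    by have := d_least (DFin k.+1) (conj bound_pred isT); rewrite /= ltnn.
- split=> // -[k bound_k].
  have bound_max : da_at_most A (DFin (maxn 1 k)).
    by move=> t; apply: card_le_leq (bound_k t) (leq_maxr 1 k).
  by have := d_least _ (conj bound_max (leq_maxl 1 k)).
- by split=> // finite; have := d_least DFinite (conj finite isT).
- by move=> countable; have := d_least DAleph0 (conj countable isT).
Qed.

End Degree.

Lemma da_aut_le_embeds Sigma1 Sigma2 (A : PTA Sigma1) (B : PTA Sigma2) dA dB :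
  (forall t, exists t', set_embeds (ACC A t) (ACC B t')) ->
  da_aut A dA -> da_aut B dB -> degree_le dA dB.
Proof.
move=> AB daA daB; apply: da_aut_least daA _ (da_aut_ge1 daB).
have := da_aut_at_most daB; case: dB {daB} => [k|||] //= bound t;
  have [t' ACC_AB] := AB t.
- exact: (card_le_embeds ACC_AB (bound t')).
- exact: (finite_set_embeds ACC_AB (bound t')).
- exact: (countable_set_embeds ACC_AB (bound t')).
Qed.

Lemma da_lang_exists Sigma (L : tree Sigma -> Prop) :
  regular L -> exists d, da_lang L d.
Proof.
move=> [A LA]; have [dA daA] := da_aut_exists A.
have [d [B [LB daB]] d_least] := exists_least_degree
  (ex_intro (fun d => exists B : PTA Sigma, lang_of B L /\ da_aut B d)
     dA (ex_intro _ A (conj LA daA))).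
exists d; split; first by exists B.
by move=> B' d' LB' daB'; apply: d_least; exists B'.
Qed.

Section MoorePreimage.
Variables (Sigma1 Sigma2 : finType) (M : moore Sigma1 Sigma2) (B : PTA Sigma2).

(* A state at v pairs the state of M after reading the labels strictly above v
   with a state of B at v. *)
Definition prod_pta : PTA Sigma1 :=
  @mkPTA Sigma1 (mm_st M * pta_st B)%type
    (fun p => (p.1 == mm_init M) && pta_init p.2)
    (fun p a pl pr => [&& pl.1 == mm_delta p.1 a, pr.1 == mm_delta p.1 a &
                        pta_delta p.2 (mm_out (mm_delta p.1 a)) pl.2 pr.2])
    (fun p => pta_col p.2).

Definition prefix_word (t : tree Sigma1) (v : node) : seq Sigma1 :=
  [seq t (take i v) | i <- iota 0 (size v)].

Definition moore_state_at t v := mm_run M (prefix_word t v).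

Lemma path_word_rcons_prefix t v : path_word t v = rcons (prefix_word t v) (t v).
Proof.
by rewrite /path_word /prefix_word -addn1 iotaD map_cat /= add0n take_size cats1.
Qed.

Lemma prefix_word_rcons t v b : prefix_word t (rcons v b) = path_word t v.
Proof.
rewrite /prefix_word /path_word size_rcons; apply/eq_in_map => i.
rewrite mem_iota add0n ltnS => /andP [_ le_iv].
rewrite -cats1 take_cat; case: ltnP => // le_vi.
have -> : i = size v by apply/eqP; rewrite eqn_leq le_iv le_vi.
by rewrite subnn take0 cats0 take_size.
Qed.

Lemma moore_state_at_rcons t v b :
  moore_state_at t (rcons v b) = mm_delta (moore_state_at t v) (t v).
Proof.
by rewrite /moore_state_at prefix_word_rcons path_word_rcons_prefix /mm_run foldl_rcons.
Qed.

Lemma prod_computation_fst t phi :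
  is_computation prod_pta t phi -> forall v, (phi v).1 = moore_state_at t v.
Proof.
move=> [init step]; elim/last_ind => [|v b IHv].
  by move: init => /andP [/eqP -> _].
rewrite moore_state_at_rcons -IHv.
by have /and3P [/eqP phi_l /eqP phi_r _] := step v; case: b.
Qed.

Variables (F : seq Sigma1 -> Sigma2).
Hypothesis MF : forall w, F w = mm_out (mm_run M w).

Lemma Fhat_moore_state t v : Fhat F t v = mm_out (mm_delta (moore_state_at t v) (t v)).
Proof. by rewrite /Fhat MF path_word_rcons_prefix /mm_run foldl_rcons. Qed.

Lemma prod_ACC_snd t phi : ACC prod_pta t phi -> ACC B (Fhat F t) (fun v => (phi v).2).
Proof.
move=> [comp parity]; have phi_fst := prod_computation_fst comp.
case: comp => init step; do 2!split => //; first by case/andP: init.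
by move=> v; rewrite Fhat_moore_state -phi_fst; case/and3P: (step v).
Qed.

Definition prod_lift t (psi : node -> pta_st B) : node -> pta_st prod_pta :=
  fun v => (moore_state_at t v, psi v).

Lemma prod_lift_ACC t psi : ACC B (Fhat F t) psi -> ACC prod_pta t (prod_lift t psi).
Proof.
move=> [[init step] parity]; do 2!split => //; first by rewrite /= eqxx init.
by move=> v; rewrite /= !moore_state_at_rcons !eqxx -Fhat_moore_state step.
Qed.

Lemma prod_lift_snd t phi : ACC prod_pta t phi -> prod_lift t (fun v => (phi v).2) = phi.
Proof.
move=> [comp _]; apply: functional_extensionality => v.
by rewrite /prod_lift -(prod_computation_fst comp v); case: (phi v).
Qed.

Lemma prod_ACC_embeds t : set_embeds (ACC prod_pta t) (ACC B (Fhat F t)).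
Proof.
exists (fun phi v => (phi v).2), (prod_lift t) => phi acc_phi.
by split; [apply: prod_ACC_snd | apply: prod_lift_snd].
Qed.

Lemma prod_lang L2 : lang_of B L2 -> lang_of prod_pta (fun t => L2 (Fhat F t)).
Proof.
move=> LB t; rewrite -LB; split => -[phi acc_phi].
- by exists (fun v => (phi v).2); apply: prod_ACC_snd.
- by exists (prod_lift t phi); apply: prod_lift_ACC.
Qed.

End MoorePreimage.

Theorem lemma3p10 (Sigma1 Sigma2 : finType)
  (L1 : tree Sigma1 -> Prop) (L2 : tree Sigma2 -> Prop)
  (F : seq Sigma1 -> Sigma2) :
  regular L1 -> regular L2 -> moore_definable F ->
  (forall t : tree Sigma1, L1 t <-> L2 (Fhat F t)) ->
  exists d1 d2, da_lang L1 d1 /\ da_lang L2 d2 /\ degree_le d1 d2.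
Proof.
move=> reg1 reg2 [M MF] L12.
have [d1 daL1] := da_lang_exists reg1.
have [_ d1_least] := daL1.
have [d2 daL2] := da_lang_exists reg2.
have [[B [LB daB]] _] := daL2.
have L1_prod : lang_of (prod_pta M B) L1.
  by move=> t; rewrite L12; exact: (prod_lang MF LB t).
have [dA daA] := da_aut_exists (prod_pta M B).
exists d1, d2; do 2!split => //.
apply: degree_le_trans (d1_least _ _ L1_prod daA) _.
apply: da_aut_le_embeds _ daA daB => t.
by exists (Fhat F t); apply: prod_ACC_embeds.
Qed.
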